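(* Let $p$ be a prime. Let $A$ be the classical divided power algebra over $\mathbb Z_{(p)}$ in a variable $y$, regarded as an ungraded ring. Let $\mathbf D$ be the classical divided power algebra over $A$ in a variable $x$, graded by the $x$-degree; equivalently, $\mathbf D$ is the classical divided power algebra over $\mathbb Z_{(p)}$ in two variables $x,y$. Then: - The ideal of $\mathbf D$ generated by $y^{[1]}$ and $x^{[1]}$ is not finitely presented. - $\mathbf D$ is neither graded-coherent (for the $x$-grading) nor coherent. - $\mathbf D$ is not graded-coherent with respect to its bigrading by $(x\text{-degree},y\text{-degree})$.
   Context: The classical divided power algebra over a commutative ring $R$ in a variable $z$ is the $R$-algebra that is free as an $R$-module on basis $z^{[i]}$ ($i\ge0$), with $z^{[n]}z^{[m]}=\binom{n+m}{n}z^{[n+m]}$. In two variables it is the tensor product over $R$ of the one-variable algebras, with basis $x^{[i]}y^{[j]}$. A (graded) ring is (graded-)coherent if every finitely generated (homogeneous) ideal is finitely presented. *)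

From HB Require Import structures.
From mathcomp Require Import all_boot all_order all_algebra.
Set Implicit Arguments. Unset Strict Implicit. Unset Printing Implicit Defensive.
Import Order.TTheory GRing.Theory Num.Theory.
Local Open Scope ring_scope.

(* Z_(p) realised as the subring of Q of fractions whose (reduced)
   denominator is not divisible by p. *)
Definition inZp (p : nat) (q : rat) : Prop := ~~ (p %| `|denq q|)%N.

(* An element of the two-variable divided power algebra D over Z_(p) is a
   finitely supported family of coefficients c i j in Z_(p), standing for
   \sum c i j x^[i] y^[j]. *)
Definition dpT := nat -> nat -> rat.

Definition inD (p : nat) (f : dpT) : Prop :=
  (forall i j, inZp p (f i j)) /\
  (exists N : nat, forall i j, ((N <= i)%N || (N <= j)%N) -> f i j = 0).

Definition dzero : dpT := fun _ _ => 0.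

Definition deq (f g : dpT) : Prop := forall i j, f i j = g i j.

(* multiplication: x^[a]y^[b] * x^[c]y^[d] = C(a+c,a) C(b+d,b) x^[a+c]y^[b+d] *)
Definition dmul (f g : dpT) : dpT := fun i j =>
  \sum_(a < i.+1) \sum_(b < j.+1)
     ('C(i, a) * 'C(j, b))%:R * f a b * g (i - a)%N (j - b)%N.

Definition x1 : dpT := fun i j => if (i == 1%N) && (j == 0%N) then 1 else 0.
Definition y1 : dpT := fun i j => if (i == 0%N) && (j == 1%N) then 1 else 0.

Definition lincomb (cs gs : seq dpT) : dpT := fun i j =>
  \sum_(k < size gs) dmul (nth dzero cs k) (nth dzero gs k) i j.

Definition allD (p : nat) (s : seq dpT) : Prop :=
  forall k, (k < size s)%N -> inD p (nth dzero s k).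

Definition ideal_gen (p : nat) (gs : seq dpT) (f : dpT) : Prop :=
  exists cs : seq dpT, size cs = size gs /\ allD p cs /\ deq f (lincomb cs gs).

Definition generates (p : nat) (gs : seq dpT) (I : dpT -> Prop) : Prop :=
  allD p gs /\ forall f, I f <-> ideal_gen p gs f.

Definition fg_ideal (p : nat) (I : dpT -> Prop) : Prop :=
  exists gs : seq dpT, generates p gs I.

Definition syzygy (p : nat) (gs s : seq dpT) : Prop :=
  size s = size gs /\ allD p s /\ deq (lincomb s gs) dzero.

Definition in_submod (p : nat) (rels : seq (seq dpT)) (s : seq dpT) : Prop :=
  exists cs : seq dpT, size cs = size rels /\ allD p cs /\
    forall k, (k < size s)%N ->
      deq (nth dzero s k)
          (fun i j => \sum_(l < size rels)
                        dmul (nth dzero cs l) (nth dzero (nth [::] rels l) k) i j).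

Definition fp_ideal (p : nat) (I : dpT -> Prop) : Prop :=
  exists gs : seq dpT, generates p gs I /\
    exists rels : seq (seq dpT),
      (forall l, (l < size rels)%N -> syzygy p gs (nth [::] rels l)) /\
      (forall s, syzygy p gs s -> in_submod p rels s).

Definition xcomp (d : nat) (f : dpT) : dpT := fun i j => if i == d then f i j else 0.
Definition bicomp (d e : nat) (f : dpT) : dpT :=
  fun i j => if (i == d) && (j == e) then f i j else 0.

Definition x_homogeneous (I : dpT -> Prop) : Prop :=
  forall f, I f -> forall d, I (xcomp d f).
Definition bi_homogeneous (I : dpT -> Prop) : Prop :=
  forall f, I f -> forall d e, I (bicomp d e f).

Definition coherent (p : nat) : Prop :=
  forall I : dpT -> Prop, fg_ideal p I -> fp_ideal p I.
Definition x_graded_coherent (p : nat) : Prop :=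
  forall I : dpT -> Prop, x_homogeneous I -> fg_ideal p I -> fp_ideal p I.
Definition bi_graded_coherent (p : nat) : Prop :=
  forall I : dpT -> Prop, bi_homogeneous I -> fg_ideal p I -> fp_ideal p I.

(* Inside the ring of divided power series over Q in x and y, D is the subring
   of finitely supported series with coefficients in Z_(p).  Let (g_k) be
   generators of I = (y, x), written g_k = A_k y + B_k x.  A syzygy s of (g_k)
   gives the relation (sum_k s_k A_k) y + (sum_k s_k B_k) x = 0, which forces
   sum_k s_k A_k = h x with p^M h integral for some M; if the syzygies are
   finitely generated, one M works for all of them.  Lifting the relation
   (x^[N] y^[N-1]) y = (x^[N-1] y^[N]) x, N = p^(M+1), to a syzygy and
   comparing the sums sum_k s_k A_k then exhibits x^[N] y^[N-1] as such an h x,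
   which is impossible since this h has the coefficient 1/N.  As I is
   bihomogeneous, it witnesses all three failures of coherence. *)

From HB Require Import structures.
From mathcomp Require Import all_boot all_order all_algebra.
From mathcomp Require Import boolp ring zify.
Set Implicit Arguments. Unset Strict Implicit. Unset Printing Implicit Defensive.
Import Order.TTheory GRing.Theory Num.Theory.
Local Open Scope ring_scope.

Lemma bin_mulC_sub n a k : ('C(n, a) * 'C(n - a, k) = 'C(n, k) * 'C(n - k, a))%N.
Proof.
have [nak|akn] := ltnP n (a + k).
  have [na|an] := ltnP n a.
    by rewrite (bin_small na) (@bin_small (n - k) a) ?mul0n ?muln0 //; lia.
  rewrite (@bin_small (n - a) k) ?muln0; last lia.
  have [nk|kn] := ltnP n k; first by rewrite bin_small.
  by rewrite (@bin_small (n - k) a) ?muln0; last lia.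
have fact_pos : (0 < a`! * k`! * (n - a - k)`!)%N by rewrite !muln_gt0 !fact_gt0.
apply/eqP; rewrite -(eqn_pmul2r fact_pos); apply/eqP.
have Ea : ('C(n - a, k) * (k`! * (n - a - k)`!) = (n - a)`!)%N by rewrite bin_fact //; lia.
have Ek : ('C(n - k, a) * (a`! * (n - a - k)`!) = (n - k)`!)%N by rewrite subnAC bin_fact //; lia.
transitivity ('C(n, a) * (a`! * (n - a)`!))%N; first by rewrite -Ea; ring.
transitivity ('C(n, k) * (k`! * (n - k)`!))%N; last by rewrite -Ek; ring.
by rewrite !bin_fact //; lia.
Qed.

Definition dpseries (R : Type) := nat -> R.
HB.instance Definition _ (R : choiceType) := Choice.on (dpseries R).

Section DividedPowerSeries.
Variable R : comNzRingType.
Local Notation S := (dpseries R).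

Definition dps_add (f g : S) : S := fun n => f n + g n.
Definition dps_opp (f : S) : S := fun n => - f n.
Definition dps_zero : S := fun _ => 0.

Fact dps_addA : associative dps_add.
Proof. by move=> f g h; apply/funext => n; apply: addrA. Qed.
Fact dps_addC : commutative dps_add.
Proof. by move=> f g; apply/funext => n; apply: addrC. Qed.
Fact dps_add0 : left_id dps_zero dps_add.
Proof. by move=> f; apply/funext => n; apply: add0r. Qed.
Fact dps_addN : left_inverse dps_zero dps_opp dps_add.
Proof. by move=> f; apply/funext => n; apply: addNr. Qed.

HB.instance Definition _ := GRing.isZmodule.Build S dps_addA dps_addC dps_add0 dps_addN.

Lemma dps_sumE I (r : seq I) (P : pred I) (F : I -> S) n :
  (\sum_(i <- r | P i) F i) n = \sum_(i <- r | P i) F i n.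
Proof. by elim/big_rec2: _ => // i s t _ <-. Qed.

Lemma dps_natmulE (f : S) k n : (f *+ k) n = f n *+ k.
Proof. by elim: k => // k IH; rewrite !mulrS -IH. Qed.

Definition dps_mul (f g : S) : S := fun n => \sum_(a < n.+1) f a * g (n - a)%N *+ 'C(n, a).
Definition dps_one : S := fun n => (n == 0)%:R.

Lemma dps_mul_widen f g n m : (n <= m)%N ->
  dps_mul f g n = \sum_(a < m.+1) f a * g (n - a)%N *+ 'C(n, a).
Proof.
move=> nm; rewrite /dps_mul (big_ord_widen m.+1 (fun a => f a * g (n - a)%N *+ 'C(n, a))) //.
rewrite big_mkcond; apply: eq_bigr => a _; case: ifPn => //.
by rewrite -leqNgt => /bin_small ->.
Qed.

Lemma dps_mul_rev f g n : dps_mul f g n = \sum_(k < n.+1) f (n - k)%N * g k *+ 'C(n, k).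
Proof.
rewrite /dps_mul (reindex_inj rev_ord_inj); apply: eq_bigr => k _ /=.
by rewrite subSS subKn ?bin_sub // -ltnS.
Qed.

Fact dps_mulC : commutative dps_mul.
Proof.
by move=> f g; apply/funext => n; rewrite dps_mul_rev; apply: eq_bigr => a _; rewrite mulrC.
Qed.

Fact dps_mulA : associative dps_mul.
Proof.
move=> f g h; apply/funext => n.
rewrite (dps_mul_widen f _ (leqnn n)) dps_mul_rev.
transitivity (\sum_(a < n.+1) \sum_(k < n.+1)
                f a * g (n - a - k)%N * h k *+ ('C(n, a) * 'C(n - a, k))).
  apply: eq_bigr => a _; rewrite [dps_mul g h]dps_mulC (dps_mul_widen h g (leq_subr a n)).
  rewrite mulr_sumr -sumrMnl; apply: eq_bigr => k _.
  by rewrite mulrnAr -mulrnA mulnC; congr (_ *+ _); ring.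
rewrite exchange_big; apply: eq_bigr => k _.
rewrite (dps_mul_widen f g (leq_subr k n)) mulr_suml -sumrMnl.
by apply: eq_bigr => a _; rewrite mulrnAl -mulrnA subnAC bin_mulC_sub mulnC.
Qed.

Fact dps_mul1 : left_id dps_one dps_mul.
Proof.
move=> f; apply/funext => n; rewrite /dps_mul big_ord_recl big1 ?addr0.
  by rewrite mul1r subn0 bin0.
by move=> a _; rewrite mul0r mul0rn.
Qed.

Fact dps_mulDl : left_distributive dps_mul dps_add.
Proof.
move=> f g h; apply/funext => n; rewrite /dps_mul /dps_add -big_split.
by apply: eq_bigr => a _; rewrite mulrDl mulrnDl.
Qed.

Fact dps_one_neq0 : dps_one != dps_zero.
Proof. by apply/eqP => /(congr1 (fun f => f 0%N)) /eqP; rewrite oner_eq0. Qed.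

HB.instance Definition _ :=
  GRing.Zmodule_isComNzRing.Build S dps_mulA dps_mulC dps_mul1 dps_mulDl dps_one_neq0.

Lemma dps_mulE (f g : S) n : (f * g) n = \sum_(a < n.+1) f a * g (n - a)%N *+ 'C(n, a).
Proof. by []. Qed.

Lemma dps_oneE n : (1 : S) n = (n == 0)%:R.
Proof. by []. Qed.

End DividedPowerSeries.

Definition dp2 := dpseries (dpseries rat).

Lemma dmulE (f g : dpT) : dmul f g = (f : dp2) * g.
Proof.
apply/funext => i; apply/funext => j; rewrite dps_mulE dps_sumE /dmul.
apply: eq_bigr => a _; rewrite dps_natmulE dps_mulE -sumrMnl; apply: eq_bigr => b _.
by rewrite -mulrnA -mulrA mulr_natl mulnC.
Qed.

Lemma dp2_zeroE i j : (0 : dp2) i j = 0.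
Proof. by []. Qed.

Lemma dp2_addE (f g : dp2) i j : (f + g) i j = f i j + g i j.
Proof. by []. Qed.

Lemma dp2_oppE (f : dp2) i j : (- f) i j = - f i j.
Proof. by []. Qed.

Lemma dp2_natrME n (f : dp2) i j : (n%:R * f) i j = n%:R * f i j.
Proof. by rewrite mulr_natl !dps_natmulE mulr_natl. Qed.

Lemma dp2_sumE I (r : seq I) (P : pred I) (F : I -> dp2) i j :
  (\sum_(k <- r | P k) F k) i j = \sum_(k <- r | P k) F k i j.
Proof. by rewrite !dps_sumE. Qed.

Lemma dp2_mulE (f g : dp2) i j : (f * g) i j =
  \sum_(a < i.+1) \sum_(b < j.+1) ('C(i, a) * 'C(j, b))%:R * f a b * g (i - a)%N (j - b)%N.
Proof. by rewrite -dmulE. Qed.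

Lemma sum_ord_delta (R : pzSemiRingType) n a (F : nat -> R) :
  \sum_(k < n) (k == a :> nat)%:R * F k = (a < n)%N%:R * F a.
Proof.
have [an|na] := ltnP a n; last first.
  by rewrite big1 ?mul0r // => k _; rewrite ltn_eqF ?mul0r // (leq_trans (ltn_ord k)).
rewrite (bigD1 (Ordinal an)) //= eqxx !mul1r big1 ?addr0 // => k /negbTE.
by rewrite -val_eqE /= => ->; rewrite mul0r.
Qed.

Definition dmon (a b : nat) : dp2 := fun i j => ((i == a) && (j == b))%:R.

Lemma x1_dmon : x1 = dmon 1 0.
Proof. by apply/funext => i; apply/funext => j; rewrite /x1 /dmon; case: (_ && _). Qed.

Lemma y1_dmon : y1 = dmon 0 1.
Proof. by apply/funext => i; apply/funext => j; rewrite /y1 /dmon; case: (_ && _). Qed.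

Lemma dp2_oneE : 1 = dmon 0 0.
Proof.
apply/funext => i; apply/funext => j.
by rewrite dps_oneE dps_natmulE dps_oneE /dmon -mulrnA mulnb andbC.
Qed.

Lemma coef_mul_dmon (f : dp2) a b i j : (f * dmon a b) i j =
  ((a <= i)%N && (b <= j)%N)%:R * ('C(i, a) * 'C(j, b))%:R * f (i - a)%N (j - b)%N.
Proof.
pose G a' b' := ('C(i, a') * 'C(j, b'))%:R * f (i - a')%N (j - b')%N.
rewrite mulrC dp2_mulE.
transitivity (\sum_(a' < i.+1) (a' == a :> nat)%:R *
                \sum_(b' < j.+1) (b' == b :> nat)%:R * G a' b').
  apply: eq_bigr => a' _; rewrite mulr_sumr; apply: eq_bigr => b' _.
  by rewrite /dmon /G -mulnb natrM; ring.
under eq_bigr => a' _ do rewrite (sum_ord_delta _ _ (G a')).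
rewrite (sum_ord_delta _ _ (fun a' => (b < j.+1)%N%:R * G a' b)).
by rewrite /G !ltnS -mulnb natrM; ring.
Qed.

Lemma coef_mul_x1 (f : dp2) i j : (f * x1) i j = i%:R * f i.-1 j.
Proof.
rewrite x1_dmon coef_mul_dmon bin1 bin0 muln1 subn1 subn0.
by case: i => [|i]; rewrite ?mul0r ?mul1r.
Qed.

Lemma coef_mul_y1 (f : dp2) i j : (f * y1) i j = j%:R * f i j.-1.
Proof.
rewrite y1_dmon coef_mul_dmon bin1 bin0 mul1n subn1 subn0 leq0n.
by case: j => [|j]; rewrite ?mul0r ?mul1r.
Qed.

Lemma dmonM a b c d :
  dmon a b * dmon c d = dmon (a + c) (b + d) *+ ('C(a + c, c) * 'C(b + d, d)).
Proof.
apply/funext => i; apply/funext => j.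
rewrite coef_mul_dmon !dps_natmulE /dmon.
have [/andP [ci dj]|ncd] := boolP ((c <= i)%N && (d <= j)%N); last first.
  rewrite !mul0r; move: ncd; rewrite negb_and -!ltnNge.
  case: eqP => [->|_]; last by rewrite mul0rn.
  case: eqP => [->|_]; last by rewrite mul0rn.
  by rewrite !ltnNge !leq_addl.
rewrite mul1r -{1 3}(subnK ci) -{1 3}(subnK dj) !eqn_add2r.
by case: eqP => [->|_]; case: eqP => [->|_]; rewrite /= ?mulr1 ?mulr0 ?mul0rn.
Qed.

Lemma dmon_syzygy N : (0 < N)%N -> dmon N N.-1 * y1 = dmon N.-1 N * x1.
Proof.
move=> N0; rewrite x1_dmon y1_dmon !dmonM !addn0 !addn1 prednK //.
by rewrite !bin0 bin1 mulnC.
Qed.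

Definition nthd (s : seq dpT) k : dp2 := nth dzero s k.

Lemma lincombE cs gs : lincomb cs gs = \sum_(k < size gs) nthd cs k * nthd gs k.
Proof.
by apply/funext => i; apply/funext => j; rewrite dp2_sumE; under eq_bigr do rewrite -dmulE.
Qed.

Lemma deqP (f g : dpT) : deq f g <-> f = g.
Proof. by split => [fg|-> //]; apply/funext => i; apply/funext => j. Qed.

Section Localization.
Variable p : nat.
Hypothesis p_prime : prime p.

(* [inZp p] as a boolean predicate, so that it carries a subring structure. *)
Definition zpl : {pred rat} := fun q => ~~ (p %| `|denq q|)%N.

Lemma zplP x :
  reflect (exists2 d : nat, ~~ (p %| d)%N & d%:R * x \is a Num.int) (x \in zpl).
Proof.
apply: (iffP idP) => [zx | [d pd /intrP [n dx]]].
  exists `|denq x|%N => //.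
  by rewrite pmulrn absz_denq mulrC -numqE intr_int.
have d0 : d != 0%N by apply: contraNneq pd => ->; rewrite dvdn0.
have -> : x = n%:~R / (d%:Z)%:~R by rewrite -pmulrn -dx mulrAC divff ?mul1r // pnatr_eq0.
apply: contra pd => /dvdn_trans; apply.
rewrite -[X in (_ %| X)%N]/(`|d%:Z|%N).
by case: divqP => // k y _; rewrite abszM dvdn_mull.
Qed.

Fact zpl_subring : subring_closed zpl.
Proof.
split.
- by apply/zplP; exists 1%N; rewrite ?mul1r ?rpred1 // dvdn1 gtn_eqF ?prime_gt1.
- move=> x y /zplP [d pd dx] /zplP [e pe ey]; apply/zplP; exists (d * e)%N.
    by rewrite Euclid_dvdM // negb_or pd.
  rewrite natrM mulrBr; apply: rpredB.
    by rewrite mulrAC rpredM ?natr_int.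
  by rewrite -mulrA rpredM ?natr_int.
- move=> x y /zplP [d pd dx] /zplP [e pe ey]; apply/zplP; exists (d * e)%N.
    by rewrite Euclid_dvdM // negb_or pd.
  by rewrite natrM mulrACA rpredM.
Qed.

HB.instance Definition _ := GRing.isSubringClosed.Build rat zpl zpl_subring.

Lemma zplV_nat d : ~~ (p %| d)%N -> d%:R^-1 \in zpl.
Proof.
move=> pd; apply/zplP; exists d => //.
by rewrite divff ?rpred1 // pnatr_eq0; apply: contraNneq pd => ->; rewrite dvdn0.
Qed.

Lemma zpl_expn_div n m : (0 < m)%N -> (m <= n)%N -> (p ^ n)%:R / m%:R \in zpl.
Proof.
move=> m0 mn; set v := logn p m.
have vn : (v <= n)%N.
  apply: leq_trans (ltnW (ltn_expl v (prime_gt1 p_prime))) (leq_trans _ mn).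
  by rewrite -p_part dvdn_leq // dvdn_part.
have pv0 : (p ^ v)%:R != 0 :> rat by rewrite pnatr_eq0 -lt0n expn_gt0 prime_gt0.
have u0 : (m`_p^')%:R != 0 :> rat by rewrite pnatr_eq0 -lt0n part_gt0.
have -> : (p ^ n)%:R / m%:R = (p ^ (n - v))%:R * (m`_p^')%:R^-1 :> rat.
  have Em : m = (p ^ v * m`_p^')%N by rewrite -p_part partnC.
  rewrite {1}Em -{1}(subnK vn) expnD !natrM; field.
  by rewrite pv0 u0.
by rewrite rpredM ?rpred_nat // zplV_nat // -p'natE // part_pnat.
Qed.

Lemma zpl_expn_divN M : (p ^ M)%:R / (p ^ M.+1)%:R \notin zpl.
Proof.
have pM0 : (p ^ M)%:R != 0 :> rat by rewrite pnatr_eq0 -lt0n expn_gt0 prime_gt0.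
rewrite expnSr natrM invfM mulrA divff // mul1r.
by rewrite /in_mem /= /zpl -[p%:R]/((p%:Z)%:~R) denqVz ?negbK //= eqz_nat -lt0n prime_gt0.
Qed.

Implicit Types f g h : dp2.

Definition zp_coefs (h : dp2) := forall i j, h i j \in zpl.

Lemma zp_coefs0 : zp_coefs 0.
Proof. by move=> i j; rewrite dp2_zeroE rpred0. Qed.

Lemma zp_coefsD f g : zp_coefs f -> zp_coefs g -> zp_coefs (f + g).
Proof. by move=> zf zg i j; rewrite dp2_addE rpredD ?zf ?zg. Qed.

Lemma zp_coefsN f : zp_coefs f -> zp_coefs (- f).
Proof. by move=> zf i j; rewrite dp2_oppE rpredN. Qed.

Lemma zp_coefsM f g : zp_coefs f -> zp_coefs g -> zp_coefs (f * g).
Proof.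
move=> zf zg i j; rewrite dp2_mulE.
by apply: rpred_sum => a _; apply: rpred_sum => b _; rewrite !rpredM ?rpred_nat.
Qed.

Lemma zp_coefs_nat n : zp_coefs n%:R.
Proof. by move=> i j; rewrite dps_natmulE dps_natmulE dp2_oneE rpredMn ?rpred_nat. Qed.

Lemma zp_coefs_dmon a b : zp_coefs (dmon a b).
Proof. by move=> i j; rewrite rpred_nat. Qed.

Definition finsupp (f : dp2) :=
  exists N, forall i j, ((N <= i) || (N <= j))%N -> f i j = 0.

Lemma inDE f : inD p f = (zp_coefs f /\ finsupp f).
Proof. by []. Qed.

Lemma inD_dmon a b : inD p (dmon a b).
Proof.
split; first exact: zp_coefs_dmon.
exists (maxn a b).+1 => i j; rewrite /dmon.
by case: eqP => [->|//]; case: eqP => [->|//]; rewrite ltnNge leq_maxl ltnNge leq_maxr.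
Qed.

Lemma inD0 : inD p (0 : dp2).
Proof. by rewrite inDE; split; [exact: zp_coefs0 | exists 0%N]. Qed.

Lemma inDD f g : inD p f -> inD p g -> inD p (f + g).
Proof.
move=> [zf [M fM]] [zg [N gN]]; split; first exact: zp_coefsD.
by exists (maxn M N) => i j ij; rewrite dp2_addE fM ?gN ?addr0 //; move: ij; rewrite !geq_max; lia.
Qed.

Lemma inDN f : inD p f -> inD p (- f).
Proof.
move=> [zf [M fM]]; split; first exact: zp_coefsN.
by exists M => i j ij; rewrite dp2_oppE fM ?oppr0.
Qed.

Lemma inDM f g : inD p f -> inD p g -> inD p (f * g).
Proof.
move=> [zf [M fM]] [zg [N gN]]; split; first exact: zp_coefsM.
exists (M + N)%N => i j ij; rewrite dp2_mulE big1 // => a _; rewrite big1 // => b _.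
have [ab|] := boolP ((M <= a) || (M <= b))%N; first by rewrite fM ?mulr0 ?mul0r.
by move=> ab; rewrite gN ?mulr0 //; move: ab ij (ltn_ord a) (ltn_ord b); lia.
Qed.

Lemma inD_sum I (r : seq I) (P : pred I) (F : I -> dp2) :
  (forall k, P k -> inD p (F k)) -> inD p (\sum_(k <- r | P k) F k).
Proof. by move=> PF; apply: big_ind => //; [apply: inD0 | apply: inDD]. Qed.

Definition x1_multiple M f := exists2 h, zp_coefs ((p ^ M)%:R * h) & f = h * x1.

Lemma x1_multiple0 M : x1_multiple M 0.
Proof. by exists 0; rewrite ?mulr0 ?mul0r //; apply: zp_coefs0. Qed.

Lemma x1_multipleD M f g : x1_multiple M f -> x1_multiple M g -> x1_multiple M (f + g).
Proof.
move=> [h zh ->] [k zk ->]; exists (h + k); last by rewrite mulrDl.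
by rewrite mulrDr; apply: zp_coefsD.
Qed.

Lemma x1_multipleN M f : x1_multiple M f -> x1_multiple M (- f).
Proof.
move=> [h zh ->]; exists (- h); last by rewrite mulNr.
by rewrite mulrN; apply: zp_coefsN.
Qed.

Lemma x1_multiple_sum M I (r : seq I) (P : pred I) (F : I -> dp2) :
  (forall k, P k -> x1_multiple M (F k)) -> x1_multiple M (\sum_(k <- r | P k) F k).
Proof. by move=> PF; apply: big_ind => //; [apply: x1_multiple0 | apply: x1_multipleD]. Qed.

Lemma x1_multipleMl M c f : zp_coefs c -> x1_multiple M f -> x1_multiple M (c * f).
Proof.
move=> zc [h zh ->]; exists (c * h); last by rewrite mulrA.
by rewrite mulrCA; apply: zp_coefsM.
Qed.

Lemma x1_multiple_widen M M' f : (M <= M')%N -> x1_multiple M f -> x1_multiple M' f.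
Proof.
move=> MM' [h zh ->]; exists h => //.
by rewrite -(subnK MM') expnD natrM -mulrA; apply: zp_coefsM => //; apply: zp_coefs_nat.
Qed.

Lemma x1_multiple_uniform m (F : nat -> dp2) :
  (forall l, (l < m)%N -> exists M, x1_multiple M (F l)) ->
  exists M, forall l, (l < m)%N -> x1_multiple M (F l).
Proof.
elim: m => [|m IH] FM; first by exists 0%N.
have [M1 HM1] := IH (fun l lm => FM l (ltnW lm)).
have [M2 HM2] := FM m (ltnSn m).
exists (maxn M1 M2) => l; rewrite ltnS leq_eqVlt => /predU1P [->|lm].
  by apply: x1_multiple_widen HM2; rewrite leq_maxr.
by apply: x1_multiple_widen (HM1 l lm); rewrite leq_maxl.
Qed.

(* The relation only gives f 0 j = 0; the bound p^N on the denominators of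
   the quotient by x^[1] comes from the finite support of f. *)
Lemma syzygy_x1_multiple f g : inD p f -> f * y1 + g * x1 = 0 -> exists M, x1_multiple M f.
Proof.
rewrite inDE => -[zf [N fN]] fg0.
have f0 j : f 0%N j = 0.
  have /eqP := congr1 (fun h : dp2 => h 0%N j.+1) fg0.
  by rewrite dp2_addE coef_mul_y1 coef_mul_x1 mul0r addr0 mulf_eq0 pnatr_eq0 => /eqP.
exists N; exists (fun i j => f i.+1 j / i.+1%:R).
  move=> i j; rewrite dp2_natrME.
  have [iN|Ni] := ltnP i.+1 N; last by rewrite fN ?Ni // mul0r mulr0 rpred0.
  by rewrite mulrCA (rpredM (zf i.+1 j)) // zpl_expn_div // ltnW.
apply/funext => i; apply/funext => j; rewrite coef_mul_x1.
by case: i => [|i] /=; rewrite ?f0 ?mul0r // mulrC mulfVK ?pnatr_eq0.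
Qed.

Lemma dmon_not_x1_multiple M : ~ x1_multiple M (dmon (p ^ M.+1) (p ^ M.+1).-1).
Proof.
set N := (p ^ M.+1)%N; have N0 : (0 < N)%N by rewrite expn_gt0 prime_gt0.
move=> [h zh /(congr1 (fun f : dp2 => f N N.-1))].
rewrite coef_mul_x1 /dmon !eqxx /= => hN.
have N0' : N%:R != 0 :> rat by rewrite pnatr_eq0 -lt0n.
have := zh N.-1 N.-1; rewrite dp2_natrME -[h _ _](mulKf N0') -hN mulr1.
by apply/negP; exact: zpl_expn_divN.
Qed.

Local Notation I := (ideal_gen p [:: y1; x1]).

Lemma inD1 : inD p (1 : dp2).
Proof. by rewrite dp2_oneE; apply: inD_dmon. Qed.

Lemma lincomb_yx (a b : dpT) : lincomb [:: a; b] [:: y1; x1] = (a : dp2) * y1 + (b : dp2) * x1.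
Proof. by rewrite lincombE !big_ord_recl big_ord0 addr0. Qed.

Lemma allD2 (a b : dpT) : allD p [:: a; b] <-> inD p a /\ inD p b.
Proof. by split => [ab|[ha hb] [|[|k]] //]; split; [apply: (ab 0%N) | apply: (ab 1%N)]. Qed.

Lemma ideal_yxP f : I f <-> exists a b : dp2, [/\ inD p a, inD p b & f = a * y1 + b * x1].
Proof.
split => [[cs [scs [csD /deqP ->]]] | [a [b [ha hb ->]]]].
  case: cs scs csD => [|a [|b [|? ?]]] // _ /allD2 [ha hb].
  by exists a, b; split => //; rewrite lincomb_yx.
exists [:: (a : dpT); (b : dpT)]; split => //; split; first exact/allD2.
by apply/deqP; rewrite lincomb_yx.
Qed.

Lemma ideal_gen_nth gs k : allD p gs -> (k < size gs)%N -> ideal_gen p gs (nthd gs k).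
Proof.
move=> gsD kn; pose e := mkseq (fun l => if l == k then 1 else 0 : dp2) (size gs).
have nth_e l : (l < size gs)%N -> nthd e l = if l == k then 1 else 0.
  by move=> ln; rewrite /nthd nth_mkseq.
exists e; split; first by rewrite size_mkseq.
split.
  move=> l; rewrite size_mkseq => ln; rewrite -/(nthd e l) nth_e //.
  by case: eqP => _; [apply: inD1 | apply: inD0].
apply/deqP; rewrite lincombE (bigD1 (Ordinal kn)) //= nth_e // eqxx mul1r big1 ?addr0 // => l.
by rewrite -val_eqE /= nth_e // => /negbTE ->; rewrite mul0r.
Qed.

Lemma generators_yx gs : generates p gs I ->
  exists A B : nat -> dp2, forall k, (k < size gs)%N ->
    [/\ inD p (A k), inD p (B k) & nthd gs k = A k * y1 + B k * x1].
Proof.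
move=> [gsD gsI].
have /choice [AB AB_E] : forall k, exists ab : dp2 * dp2, (k < size gs)%N ->
    [/\ inD p ab.1, inD p ab.2 & nthd gs k = ab.1 * y1 + ab.2 * x1].
  move=> k; have [kn|kn] := ltnP k (size gs); last by exists (0, 0).
  by have /gsI /ideal_yxP [a [b abE]] := ideal_gen_nth gsD kn; exists (a, b).
by exists (fun k => (AB k).1), (fun k => (AB k).2).
Qed.

Section Presentation.
Variables (gs : seq dpT) (A B : nat -> dp2).
Hypothesis AB : forall k, (k < size gs)%N ->
  [/\ inD p (A k), inD p (B k) & nthd gs k = A k * y1 + B k * x1].

Definition ycoef (s : seq dpT) : dp2 := \sum_(k < size gs) nthd s k * A k.
Let xcoef (s : seq dpT) : dp2 := \sum_(k < size gs) nthd s k * B k.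

Lemma lincomb_ycoef s : lincomb s gs = ycoef s * y1 + xcoef s * x1.
Proof.
rewrite lincombE !mulr_suml -big_split; apply: eq_bigr => k _.
by have [_ _ ->] := AB (ltn_ord k); rewrite mulrDr !mulrA.
Qed.

Lemma ycoef_x1_multiple s (c d : dp2) : size s = size gs -> allD p s -> inD p c ->
  lincomb s gs = c * y1 + d * x1 -> exists M, x1_multiple M (ycoef s - c).
Proof.
move=> ss sD cD sE; apply: (@syzygy_x1_multiple _ (xcoef s - d)).
  apply: inDD (inDN cD); apply: inD_sum => k _.
  by apply: inDM; [apply: sD; rewrite ss | have [] := AB (ltn_ord k)].
by rewrite !mulrBl addrACA -opprD -sE lincomb_ycoef subrr.
Qed.

Lemma ycoef_submod rels w : size w = size gs -> in_submod p rels w ->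
  exists2 cs, (forall l, (l < size rels)%N -> inD p (nthd cs l)) &
    ycoef w = \sum_(l < size rels) nthd cs l * ycoef (nth [::] rels l).
Proof.
move=> sw [cs [scs [csD wE]]]; exists cs => [l|]; first by rewrite -scs; apply: csD.
have wkE k : (k < size gs)%N ->
    nthd w k = \sum_(l < size rels) nthd cs l * nthd (nth [::] rels l) k.
  move=> kn; apply/funext => i; apply/funext => j; rewrite [nthd w k]/nthd (wE k) ?sw // dp2_sumE.
  by apply: eq_bigr => l _; rewrite dmulE.
rewrite /ycoef; under eq_bigr => k _ do rewrite wkE // mulr_suml.
rewrite exchange_big; apply: eq_bigr => l _; rewrite mulr_sumr.
by apply: eq_bigr => k _; rewrite mulrA.
Qed.

Lemma ycoef_lift_syzygy u v (a b : dp2) : size u = size gs -> size v = size gs ->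
  allD p u -> allD p v -> lincomb u gs = y1 -> lincomb v gs = x1 ->
  inD p a -> inD p b -> a * y1 = b * x1 ->
  exists2 w, syzygy p gs w & ycoef w = a * ycoef u - b * ycoef v.
Proof.
move=> su sv uD vD uE vE aD bD ab.
pose w := mkseq (fun k => a * nthd u k - b * nthd v k : dpT) (size gs).
have wk k : (k < size gs)%N -> nthd w k = a * nthd u k - b * nthd v k.
  by move=> kn; rewrite /nthd nth_mkseq.
have wX (X : nat -> dp2) : \sum_(k < size gs) nthd w k * X k =
    a * \sum_(k < size gs) nthd u k * X k - b * \sum_(k < size gs) nthd v k * X k.
  rewrite !mulr_sumr -sumrB; apply: eq_bigr => k _; by rewrite wk // mulrBl !mulrA.
exists w; last exact: wX.
split; first by rewrite size_mkseq.
split; last by apply/deqP; rewrite lincombE wX -!lincombE uE vE ab subrr.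
move=> k; rewrite size_mkseq => kn; rewrite -/(nthd w k) wk //.
by apply: inDD (inDN _); apply: inDM => //; [apply: uD; rewrite su | apply: vD; rewrite sv].
Qed.

Lemma ycoef_syzygies_bounded rels :
  (forall l, (l < size rels)%N -> syzygy p gs (nth [::] rels l)) ->
  (forall s, syzygy p gs s -> in_submod p rels s) ->
  exists M, forall w, syzygy p gs w -> x1_multiple M (ycoef w).
Proof.
move=> relsS relsG.
have [M relsM] : exists M, forall l, (l < size rels)%N -> x1_multiple M (ycoef (nth [::] rels l)).
  apply: x1_multiple_uniform => l /relsS [sr [rD /deqP r0]].
  have [|M] := @ycoef_x1_multiple _ 0 0 sr rD inD0; first by rewrite r0 !mul0r addr0.
  by rewrite subr0; exists M.
exists M => w wS; have [sw _] := wS.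
have [cs csD ->] := ycoef_submod sw (relsG w wS).
apply: x1_multiple_sum => l _; apply: x1_multipleMl _ (relsM l (ltn_ord l)).
by have [] := csD l (ltn_ord l).
Qed.

End Presentation.

Lemma ideal_yx_y1 : I y1.
Proof.
by apply/ideal_yxP; exists 1, 0; rewrite mul1r mul0r addr0; split; [apply: inD1 | apply: inD0 |].
Qed.

Lemma ideal_yx_x1 : I x1.
Proof.
by apply/ideal_yxP; exists 0, 1; rewrite mul1r mul0r add0r; split; [apply: inD0 | apply: inD1 |].
Qed.

Theorem ideal_yx_not_fp : ~ fp_ideal p I.
Proof.
move=> [gs [[gsD gsI] [rels [relsS relsG]]]].
have [A [B AB]] := generators_yx (conj gsD gsI).
have [M1 synM] := ycoef_syzygies_bounded AB relsS relsG.
have /gsI [u [su [uD /deqP/esym uE]]] := ideal_yx_y1.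
have /gsI [v [sv [vD /deqP/esym vE]]] := ideal_yx_x1.
have [|M2 uM] := @ycoef_x1_multiple _ _ _ AB u 1 0 su uD inD1.
  by rewrite uE mul1r mul0r addr0.
have [|M3 vM] := @ycoef_x1_multiple _ _ _ AB v 0 1 sv vD inD0.
  by rewrite vE mul1r mul0r add0r.
rewrite subr0 in vM.
pose M := maxn M1 (maxn M2 M3); pose N := (p ^ M.+1)%N.
have N0 : (0 < N)%N by rewrite expn_gt0 prime_gt0.
have [w wS wE] := @ycoef_lift_syzygy gs A u v _ _ su sv uD vD uE vE
  (inD_dmon _ _) (inD_dmon _ _) (dmon_syzygy N0).
apply: (@dmon_not_x1_multiple M).
have -> : dmon N N.-1 =
    ycoef gs A w - dmon N N.-1 * (ycoef gs A u - 1) + dmon N.-1 N * ycoef gs A v.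
  by rewrite wE; ring.
have le_M1 : (M1 <= M)%N by rewrite leq_maxl.
have le_M2 : (M2 <= M)%N by rewrite /M maxnCA leq_maxl.
have le_M3 : (M3 <= M)%N by rewrite /M maxnA leq_maxr.
apply: x1_multipleD; first apply: x1_multipleD (x1_multipleN _).
- exact: x1_multiple_widen le_M1 (synM w wS).
- exact: x1_multipleMl (zp_coefs_dmon _ _) (x1_multiple_widen le_M2 uM).
- exact: x1_multipleMl (zp_coefs_dmon _ _) (x1_multiple_widen le_M3 vM).
Qed.

Definition dmask (Q : nat -> nat -> bool) (f : dpT) : dp2 := fun i j => if Q i j then f i j else 0.

Lemma inD_mask Q f : inD p f -> inD p (dmask Q f).
Proof.
rewrite !inDE => -[zf [N fN]]; split => [i j|].
  by rewrite /dmask; case: ifP => _; rewrite ?rpred0.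
by exists N => i j ij; rewrite /dmask fN // if_same.
Qed.

Lemma ideal_yx_mask Q f : I f -> I (dmask Q f).
Proof.
move=> /ideal_yxP [a [b [aD bD fE]]]; apply/ideal_yxP.
exists (dmask (fun i j => Q i j.+1) a), (dmask (fun i j => Q i.+1 j) b).
split; [exact: inD_mask | exact: inD_mask |].
apply/funext => i; apply/funext => j.
rewrite /dmask fE !dp2_addE !coef_mul_y1 !coef_mul_x1.
by case: i => [|i]; case: j => [|j] /=; case: ifP; rewrite ?mulr0 ?mul0r ?addr0.
Qed.

Lemma fg_ideal_yx : fg_ideal p I.
Proof.
by exists [:: y1; x1]; split => //; apply/allD2; rewrite y1_dmon x1_dmon; split; apply: inD_dmon.
Qed.

End Localization.

Theorem mainTheorem4 (p : nat) (hp : prime p) :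
  ~ fp_ideal p (ideal_gen p [:: y1; x1]) /\
  ~ x_graded_coherent p /\ ~ coherent p /\
  ~ bi_graded_coherent p.
Proof.
have not_fp := ideal_yx_not_fp hp.
have fg := fg_ideal_yx hp.
have xhom : x_homogeneous (ideal_gen p [:: y1; x1]).
  by move=> f If d; apply: (ideal_yx_mask hp (fun i _ => i == d)).
have bihom : bi_homogeneous (ideal_gen p [:: y1; x1]).
  by move=> f If d e; apply: (ideal_yx_mask hp (fun i j => (i == d) && (j == e))).
by split => //; split; [|split] => coh; apply/not_fp/coh.
Qed.
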